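(* Let $p>1$ and $x\in(0,1)$. The functions $k\mapsto(\arcsin_p(x^k))^{1/k}$ and $k\mapsto(\operatorname{artanh}_p(x^k))^{1/k}$ are decreasing on $(0,\infty)$, and the functions $k\mapsto(\arctan_p(x^k))^{1/k}$ and $k\mapsto(\operatorname{arsinh}_p(x^k))^{1/k}$ are increasing on $(0,\infty)$. In particular, for $k\ge1$, $$\sqrt[k]{\arcsin_p(x^k)}\le\arcsin_p(x)\le(\arcsin_p\sqrt[k]{x})^k,\qquad \sqrt[k]{\operatorname{artanh}_p(x^k)}\le\operatorname{artanh}_p(x)\le(\operatorname{artanh}_p\sqrt[k]{x})^k,$$ $$(\operatorname{arsinh}_p\sqrt[k]{x})^k\le\operatorname{arsinh}_p(x)\le\sqrt[k]{\operatorname{arsinh}_p(x^k)},\qquad (\arctan_p\sqrt[k]{x})^k\le\arctan_p(x)\le\sqrt[k]{\arctan_p(x^k)}.$$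
   Context: For $p>1$ and $y\in(0,1)$: $\arcsin_p y=\int_0^y(1-t^p)^{-1/p}dt$, $\arctan_p y=\int_0^y(1+t^p)^{-1}dt$, $\operatorname{arsinh}_p y=\int_0^y(1+t^p)^{-1/p}dt$, $\operatorname{artanh}_p y=\int_0^y(1-t^p)^{-1}dt$. *)

From Stdlib Require Import Reals.
From Coquelicot Require Import Coquelicot.
Open Scope R_scope.

(* Real power x^a for x > 0 (Stdlib's Rpower), extended by 0 for x <= 0,
   so that 0^p = 0 for the integrands below (irrelevant for the Riemann
   integral, but matches the usual convention). *)
Definition rpow (x a : R) : R :=
  if Rlt_dec 0 x then Rpower x a else 0.

Definition arcsin_p (p y : R) : R :=
  RInt (fun t => rpow (1 - rpow t p) (- / p)) 0 y.
Definition arctan_p (p y : R) : R :=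
  RInt (fun t => / (1 + rpow t p)) 0 y.
Definition arsinh_p (p y : R) : R :=
  RInt (fun t => rpow (1 + rpow t p) (- / p)) 0 y.
Definition artanh_p (p y : R) : R :=
  RInt (fun t => / (1 - rpow t p)) 0 y.

Definition root_comp (F : R -> R) (x k : R) : R := rpow (F (rpow x k)) (/ k).

Definition strictly_decreasing_pos (f : R -> R) : Prop :=
  forall k1 k2, 0 < k1 -> k1 < k2 -> f k2 < f k1.
Definition strictly_increasing_pos (f : R -> R) : Prop :=
  forall k1 k2, 0 < k1 -> k1 < k2 -> f k1 < f k2.

(* Write F for one of the four integrals and y = x^k, so that
   ln (F(x^k)^(1/k)) = ln x + ln (F y / y) / k.  The mean F y / y of the
   integrand over [0, y] is strictly monotone in y because the integrand is,
   and it is >= 1 (for arcsin_p, artanh_p) or in (0, 1] (for arctan_p,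
   arsinh_p).  As k grows, y decreases, so |ln (F y / y)| and 1/k both shrink,
   the first strictly; this gives the monotonicity in k, and comparing k with
   1 and 1/k gives the inequalities. *)

From Stdlib Require Import Reals Lra.
From Coquelicot Require Import Coquelicot.
Open Scope R_scope.

Definition strictly_increasing_unit (f : R -> R) : Prop :=
  forall s t, 0 <= s -> s < t -> t < 1 -> f s < f t.
Definition strictly_decreasing_unit (f : R -> R) : Prop :=
  forall s t, 0 <= s -> s < t -> t < 1 -> f t < f s.

Lemma rpow_exp u c : 0 < u -> rpow u c = exp (c * ln u).
Proof. intros Hu. unfold rpow. destruct (Rlt_dec 0 u); [reflexivity | lra]. Qed.

Lemma rpow_nonpos u c : u <= 0 -> rpow u c = 0.
Proof. intros Hu. unfold rpow. destruct (Rlt_dec 0 u); [lra | reflexivity]. Qed.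

Lemma rpow_gt0 u c : 0 < u -> 0 < rpow u c.
Proof. intros Hu. rewrite rpow_exp by exact Hu. apply exp_pos. Qed.

Lemma ln_rpow u c : 0 < u -> ln (rpow u c) = c * ln u.
Proof. intros Hu. rewrite rpow_exp by exact Hu. apply ln_exp. Qed.

Lemma rpow_1 u : 0 < u -> rpow u 1 = u.
Proof. intros Hu. rewrite rpow_exp, Rmult_1_l by exact Hu. apply exp_ln, Hu. Qed.

Lemma rpow_1_l c : rpow 1 c = 1.
Proof. rewrite rpow_exp, ln_1, Rmult_0_r by lra. apply exp_0. Qed.

Lemma rpow_lt_exponent x k1 k2 : 0 < x < 1 -> k1 < k2 -> rpow x k2 < rpow x k1.
Proof.
  intros Hx Hk. rewrite !rpow_exp by lra. apply exp_increasing.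
  assert (ln x < 0) by (rewrite <- ln_1; apply ln_increasing; lra). nra.
Qed.

Lemma rpow_lt_base c u v : 0 < c -> 0 <= u < v -> rpow u c < rpow v c.
Proof.
  intros Hc [[Hu | <-] Huv].
  - rewrite !rpow_exp by lra. apply exp_increasing.
    assert (ln u < ln v) by (apply ln_increasing; lra). nra.
  - rewrite rpow_nonpos by lra. apply rpow_gt0, Huv.
Qed.

Lemma rpow_lt_base_neg c u v : c < 0 -> 0 < u < v -> rpow v c < rpow u c.
Proof.
  intros Hc [Hu Huv]. rewrite !rpow_exp by lra. apply exp_increasing.
  assert (ln u < ln v) by (apply ln_increasing; lra). nra.
Qed.

Lemma rpow_ge0 u c : 0 <= rpow u c.
Proof.
  destruct (Rlt_dec 0 u) as [Hu | Hu].
  - left. apply rpow_gt0, Hu.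
  - rewrite rpow_nonpos by lra. lra.
Qed.

Lemma rpow_lt_1 c t : 0 < c -> 0 <= t < 1 -> rpow t c < 1.
Proof. intros Hc Ht. rewrite <- (rpow_1_l c). apply rpow_lt_base; lra. Qed.

Lemma rpow_unit c t : 0 < c -> 0 <= t < 1 -> 0 <= rpow t c < 1.
Proof. intros Hc Ht. split; [apply rpow_ge0 | apply rpow_lt_1; assumption]. Qed.

Lemma rpow_unit_pos x k : 0 < x < 1 -> 0 < k -> 0 < rpow x k < 1.
Proof. intros Hx Hk. split; [apply rpow_gt0 | apply rpow_lt_1]; lra. Qed.

Lemma continuous_rpow u c : 0 < u -> continuous (fun v => rpow v c) u.
Proof.
  intros Hu.
  apply continuous_ext_loc with (g := fun v => exp (c * ln v)).
  - assert (Hd : 0 < u / 2) by lra.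
    exists (mkposreal _ Hd). intros v Hv.
    change (Rabs (v - u) < u / 2) in Hv. apply Rabs_def2 in Hv.
    symmetry. apply rpow_exp. lra.
  - apply continuous_exp_comp, (continuous_scal_r c ln u), continuous_ln, Hu.
Qed.

(* At 0 the exponent p > 1 gives 0 <= t^p <= t for small t >= 0, while
   rpow vanishes for t <= 0. *)
Lemma continuous_rpow_0 p : 1 < p -> continuous (fun t => rpow t p) 0.
Proof.
  intros Hp. apply continuity_pt_filterlim.
  intros eps Heps. exists (Rmin eps 1). split; [apply Rmin_pos; lra |].
  intros t [_ Ht]. simpl in *. unfold R_dist in *.
  rewrite (rpow_nonpos 0) by lra. rewrite Rminus_0_r in *.
  assert (Hm1 := Rmin_r eps 1). assert (Hm2 := Rmin_l eps 1).
  destruct (Rle_dec t 0).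
  - rewrite rpow_nonpos, Rabs_R0 by lra. exact Heps.
  - rewrite Rabs_pos_eq in Ht by lra.
    assert (Hlt := rpow_lt_exponent t 1 p ltac:(lra) Hp).
    rewrite rpow_1 in Hlt by lra.
    assert (0 < rpow t p) by (apply rpow_gt0; lra).
    rewrite Rabs_pos_eq; lra.
Qed.

Lemma continuous_rpow_unit p t : 1 < p -> 0 <= t -> continuous (fun t => rpow t p) t.
Proof.
  intros Hp [Ht | <-]; [apply continuous_rpow, Ht | apply continuous_rpow_0, Hp].
Qed.

Lemma RInt_const_R a b c : RInt (fun _ => c) a b = c * (b - a).
Proof. rewrite RInt_const. unfold scal; simpl; unfold mult; simpl. ring. Qed.

Lemma mean_lt_of_tail_gt m I J y1 y2 : 0 < y1 < y2 ->
  I / y1 <= m -> m * (y2 - y1) < J -> I / y1 < (I + J) / y2.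
Proof.
  intros Hy HI HJ. apply Rmult_lt_reg_r with (y1 * y2); [nra |].
  replace (I / y1 * (y1 * y2)) with (I / y1 * y1 * y2) by ring.
  replace ((I + J) / y2 * (y1 * y2)) with ((I / y1 * y1 + J) * y1) by (field; lra).
  assert (I / y1 * (y2 - y1) < J) by nra.
  nra.
Qed.

Section Mean.
Variable f : R -> R.
Hypothesis f_cont : forall t, 0 <= t < 1 -> continuous f t.

Lemma ex_RInt_unit a b : 0 <= a <= b -> b < 1 -> ex_RInt f a b.
Proof.
  intros Hab Hb. apply (@ex_RInt_continuous R_CompleteNormedModule).
  rewrite Rmin_left, Rmax_right by lra. intros z Hz. apply f_cont. lra.
Qed.

Lemma mean_ge_const c y : 0 < y < 1 -> (forall t, 0 < t < y -> c <= f t) ->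
  c <= RInt f 0 y / y.
Proof.
  intros Hy Hc. apply Rle_div_r; [lra |].
  replace (c * y) with (c * (y - 0)) by ring. rewrite <- RInt_const_R.
  apply RInt_le; [lra | apply ex_RInt_const | apply ex_RInt_unit; lra | exact Hc].
Qed.

Lemma mean_le_const c y : 0 < y < 1 -> (forall t, 0 < t < y -> f t <= c) ->
  RInt f 0 y / y <= c.
Proof.
  intros Hy Hc. apply Rle_div_l; [lra |].
  replace (c * y) with (c * (y - 0)) by ring. rewrite <- RInt_const_R.
  apply RInt_le; [lra | apply ex_RInt_unit; lra | apply ex_RInt_const | exact Hc].
Qed.

(* Over [y1, y2] the integrand exceeds f y1 and over [0, y1] it stays
   below it, so the mean over [0, y2] beats the mean over [0, y1]. *)
Lemma mean_strictly_increasing y1 y2 : strictly_increasing_unit f ->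
  0 < y1 -> y1 < y2 -> y2 < 1 -> RInt f 0 y1 / y1 < RInt f 0 y2 / y2.
Proof.
  intros Hf H1 H12 H2.
  rewrite <- (RInt_Chasles f 0 y1 y2) by (apply ex_RInt_unit; lra).
  apply (mean_lt_of_tail_gt (f y1)); [lra | |].
  - apply mean_le_const; [lra |]. intros t Ht. left. apply Hf; lra.
  - rewrite <- RInt_const_R. apply RInt_lt; [lra | | |].
    + intros t Ht. apply f_cont. lra.
    + intros t _. apply continuous_const.
    + intros t Ht. apply Hf; lra.
Qed.

End Mean.

Lemma mean_strictly_decreasing (f : R -> R) y1 y2 :
  (forall t, 0 <= t < 1 -> continuous f t) -> strictly_decreasing_unit f ->
  0 < y1 -> y1 < y2 -> y2 < 1 -> RInt f 0 y2 / y2 < RInt f 0 y1 / y1.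
Proof.
  intros Hc Hf H1 H12 H2.
  assert (Hopp_cont : forall t, 0 <= t < 1 -> continuous (fun t => - f t) t).
  { intros t Ht. apply (continuous_opp f), Hc, Ht. }
  assert (Hopp_RInt : forall y, 0 < y < 1 -> RInt (fun t => - f t) 0 y = - RInt f 0 y).
  { intros y Hy. apply (RInt_opp f), ex_RInt_unit; [exact Hc | lra | lra]. }
  assert (Hlt := mean_strictly_increasing (fun t => - f t) Hopp_cont y1 y2).
  rewrite !Hopp_RInt in Hlt by lra.
  assert (Hinc : strictly_increasing_unit (fun t => - f t)).
  { intros s t Hs Hst Ht. specialize (Hf s t Hs Hst Ht). lra. }
  specialize (Hlt Hinc H1 H12 H2). unfold Rdiv in *. lra.
Qed.

Lemma root_comp_exp F x k : 0 < x -> 0 < k -> 0 < F (rpow x k) ->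
  root_comp F x k = exp (ln x + ln (F (rpow x k) / rpow x k) / k).
Proof.
  intros Hx Hk HF. unfold root_comp.
  rewrite rpow_exp by exact HF. f_equal.
  rewrite ln_div, ln_rpow by (try apply rpow_gt0; lra). field. lra.
Qed.

Lemma strictly_decreasing_pos_div (h : R -> R) :
  (forall k, 0 < k -> 0 <= h k) -> strictly_decreasing_pos h ->
  strictly_decreasing_pos (fun k => h k / k).
Proof.
  intros Hnn Hdec k1 k2 Hk1 Hk12. unfold Rdiv.
  assert (Hh2 := Hnn k2 ltac:(lra)). assert (Hh := Hdec k1 k2 Hk1 Hk12).
  assert (/ k2 < / k1) by (apply Rinv_lt_contravar; nra).
  assert (0 < / k2) by (apply Rinv_0_lt_compat; lra).
  nra.
Qed.

Lemma pos_of_mean_pos (F : R -> R) y : 0 < y -> 0 < F y / y -> 0 < F y.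
Proof.
  intros Hy Hm. replace (F y) with (F y / y * y) by (field; lra). nra.
Qed.

Lemma root_comp_strictly_decreasing F x : 0 < x < 1 ->
  (forall y, 0 < y < 1 -> 1 <= F y / y) ->
  (forall y1 y2, 0 < y1 -> y1 < y2 -> y2 < 1 -> F y1 / y1 < F y2 / y2) ->
  strictly_decreasing_pos (root_comp F x).
Proof.
  intros Hx Hge Hmean.
  assert (HF : forall k, 0 < k -> 0 < F (rpow x k)).
  { intros k Hk. assert (Hy := rpow_unit_pos x k Hx Hk).
    apply pos_of_mean_pos; [lra |]. specialize (Hge _ Hy). lra. }
  assert (Hdiv : strictly_decreasing_pos
                   (fun k => ln (F (rpow x k) / rpow x k) / k)).
  { apply strictly_decreasing_pos_div.
    - intros k Hk. rewrite <- ln_1. apply ln_le; [lra |].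
      apply Hge, rpow_unit_pos; assumption.
    - intros k1 k2 Hk1 Hk12.
      assert (Hy1 := rpow_unit_pos x k1 Hx Hk1).
      assert (Hy2 := rpow_unit_pos x k2 Hx ltac:(lra)).
      apply ln_increasing.
      + apply Rdiv_lt_0_compat; [apply HF |]; lra.
      + apply Hmean; [lra | apply rpow_lt_exponent | ]; lra. }
  intros k1 k2 Hk1 Hk12.
  rewrite !root_comp_exp by (try apply HF; lra).
  apply exp_increasing. specialize (Hdiv k1 k2 Hk1 Hk12). simpl in Hdiv. lra.
Qed.

Lemma root_comp_strictly_increasing F x : 0 < x < 1 ->
  (forall y, 0 < y < 1 -> 0 < F y / y <= 1) ->
  (forall y1 y2, 0 < y1 -> y1 < y2 -> y2 < 1 -> F y2 / y2 < F y1 / y1) ->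
  strictly_increasing_pos (root_comp F x).
Proof.
  intros Hx Hle Hmean.
  assert (HF : forall k, 0 < k -> 0 < F (rpow x k)).
  { intros k Hk. assert (Hy := rpow_unit_pos x k Hx Hk).
    apply pos_of_mean_pos; [lra |]. apply Hle, Hy. }
  assert (Hdiv : strictly_decreasing_pos
                   (fun k => - ln (F (rpow x k) / rpow x k) / k)).
  { apply (strictly_decreasing_pos_div (fun k => - ln (F (rpow x k) / rpow x k))).
    - intros k Hk. assert (Hm := Hle _ (rpow_unit_pos x k Hx Hk)).
      assert (ln (F (rpow x k) / rpow x k) <= ln 1) by (apply ln_le; lra).
      rewrite ln_1 in *. lra.
    - intros k1 k2 Hk1 Hk12.
      assert (Hy1 := rpow_unit_pos x k1 Hx Hk1).
      assert (Hy2 := rpow_unit_pos x k2 Hx ltac:(lra)).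
      apply Ropp_lt_contravar, ln_increasing.
      + apply Hle. lra.
      + apply Hmean; [lra | apply rpow_lt_exponent | ]; lra. }
  intros k1 k2 Hk1 Hk12.
  rewrite !root_comp_exp by (try apply HF; lra).
  apply exp_increasing. specialize (Hdiv k1 k2 Hk1 Hk12). simpl in Hdiv.
  unfold Rdiv in *. lra.
Qed.

Lemma root_comp_1 F x : 0 < x -> 0 < F x -> root_comp F x 1 = F x.
Proof.
  intros Hx HF. unfold root_comp.
  rewrite Rinv_1, (rpow_1 x) by exact Hx. apply rpow_1, HF.
Qed.

Lemma root_comp_inv F x k : root_comp F x (/ k) = rpow (F (rpow x (/ k))) k.
Proof. unfold root_comp. rewrite Rinv_inv. reflexivity. Qed.

Lemma inv_le_1 k : 1 <= k -> 0 < / k <= 1.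
Proof.
  intros Hk. split; [apply Rinv_0_lt_compat; lra |].
  rewrite <- Rinv_1. apply Rinv_le_contravar; lra.
Qed.

Lemma strictly_decreasing_pos_le g k1 k2 :
  strictly_decreasing_pos g -> 0 < k1 -> k1 <= k2 -> g k2 <= g k1.
Proof.
  intros Hg Hk1 [Hk12 | <-]; [left; apply Hg; assumption | right; reflexivity].
Qed.

Lemma strictly_increasing_pos_le g k1 k2 :
  strictly_increasing_pos g -> 0 < k1 -> k1 <= k2 -> g k1 <= g k2.
Proof.
  intros Hg Hk1 [Hk12 | <-]; [left; apply Hg; assumption | right; reflexivity].
Qed.

Lemma root_comp_decreasing_bounds F x k : 0 < x -> 0 < F x ->
  strictly_decreasing_pos (root_comp F x) -> 1 <= k ->
  rpow (F (rpow x k)) (/ k) <= F x /\ F x <= rpow (F (rpow x (/ k))) k.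
Proof.
  intros Hx HF Hdec Hk. assert (Hinv := inv_le_1 k Hk).
  rewrite <- (root_comp_1 F x Hx HF), <- root_comp_inv.
  split.
  - apply (strictly_decreasing_pos_le (root_comp F x) 1 k); [exact Hdec | lra | lra].
  - apply (strictly_decreasing_pos_le (root_comp F x) (/ k) 1); [exact Hdec | lra | lra].
Qed.

Lemma root_comp_increasing_bounds F x k : 0 < x -> 0 < F x ->
  strictly_increasing_pos (root_comp F x) -> 1 <= k ->
  rpow (F (rpow x (/ k))) k <= F x /\ F x <= rpow (F (rpow x k)) (/ k).
Proof.
  intros Hx HF Hinc Hk. assert (Hinv := inv_le_1 k Hk).
  rewrite <- (root_comp_1 F x Hx HF), <- root_comp_inv.
  split.
  - apply (strictly_increasing_pos_le (root_comp F x) (/ k) 1); [exact Hinc | lra | lra].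
  - apply (strictly_increasing_pos_le (root_comp F x) 1 k); [exact Hinc | lra | lra].
Qed.

Section Integrand.
Variables (p : R) (phi F : R -> R).
Hypothesis p_gt1 : 1 < p.
Hypothesis phi_cont : forall u, 0 <= u < 1 -> continuous phi u.
Hypothesis phi_0 : phi 0 = 1.
Hypothesis F_def : forall y, F y = RInt (fun t => phi (rpow t p)) 0 y.

Lemma continuous_phi_rpow t : 0 <= t < 1 -> continuous (fun t => phi (rpow t p)) t.
Proof.
  intros Ht. apply (continuous_comp (fun t => rpow t p) phi).
  - apply continuous_rpow_unit; lra.
  - apply phi_cont, rpow_unit; lra.
Qed.

Lemma phi_rpow_increasing : strictly_increasing_unit phi ->
  strictly_increasing_unit (fun t => phi (rpow t p)).
Proof.
  intros Hphi s t Hs Hst Ht.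
  assert (Hs' := rpow_unit p s ltac:(lra) ltac:(lra)).
  assert (Ht' := rpow_unit p t ltac:(lra) ltac:(lra)).
  apply Hphi; [lra | apply rpow_lt_base; lra | lra].
Qed.

Lemma phi_rpow_decreasing : strictly_decreasing_unit phi ->
  strictly_decreasing_unit (fun t => phi (rpow t p)).
Proof.
  intros Hphi s t Hs Hst Ht.
  assert (Hs' := rpow_unit p s ltac:(lra) ltac:(lra)).
  assert (Ht' := rpow_unit p t ltac:(lra) ltac:(lra)).
  apply Hphi; [lra | apply rpow_lt_base; lra | lra].
Qed.

Lemma root_comp_RInt_decreasing x : 0 < x < 1 -> strictly_increasing_unit phi ->
  strictly_decreasing_pos (root_comp F x) /\
  (forall k, 1 <= k ->
     rpow (F (rpow x k)) (/ k) <= F x /\ F x <= rpow (F (rpow x (/ k))) k).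
Proof.
  intros Hx Hphi.
  assert (Hf := phi_rpow_increasing Hphi).
  assert (Hmean_ge : forall y, 0 < y < 1 -> 1 <= F y / y).
  { intros y Hy. rewrite F_def.
    apply mean_ge_const; [exact continuous_phi_rpow | exact Hy |].
    intros t Ht. rewrite <- phi_0, <- (rpow_nonpos 0 p) by lra.
    left. apply Hf; lra. }
  assert (Hdec : strictly_decreasing_pos (root_comp F x)).
  { apply root_comp_strictly_decreasing; [exact Hx | exact Hmean_ge |].
    intros y1 y2 H1 H12 H2. rewrite !F_def.
    apply mean_strictly_increasing; [exact continuous_phi_rpow | exact Hf | lra..]. }
  split; [exact Hdec |]. intros k Hk.
  apply root_comp_decreasing_bounds; [lra | | exact Hdec | exact Hk].
  apply pos_of_mean_pos; [lra |]. specialize (Hmean_ge x Hx). lra.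
Qed.

Lemma root_comp_RInt_increasing x : 0 < x < 1 -> strictly_decreasing_unit phi ->
  (forall u, 0 <= u < 1 -> 0 < phi u) ->
  strictly_increasing_pos (root_comp F x) /\
  (forall k, 1 <= k ->
     rpow (F (rpow x (/ k))) k <= F x /\ F x <= rpow (F (rpow x k)) (/ k)).
Proof.
  intros Hx Hphi Hpos.
  assert (Hf := phi_rpow_decreasing Hphi).
  assert (Hmean : forall y, 0 < y < 1 -> 0 < F y / y <= 1).
  { intros y Hy. rewrite F_def. split.
    - apply Rlt_le_trans with (phi (rpow y p)).
      + apply Hpos, rpow_unit; lra.
      + apply mean_ge_const; [exact continuous_phi_rpow | exact Hy |].
        intros t Ht. left. apply Hf; lra.
    - apply mean_le_const; [exact continuous_phi_rpow | exact Hy |].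
      intros t Ht. rewrite <- phi_0, <- (rpow_nonpos 0 p) by lra.
      left. apply Hf; lra. }
  assert (Hinc : strictly_increasing_pos (root_comp F x)).
  { apply root_comp_strictly_increasing; [exact Hx | exact Hmean |].
    intros y1 y2 H1 H12 H2. rewrite !F_def.
    apply mean_strictly_decreasing; [exact continuous_phi_rpow | exact Hf | lra..]. }
  split; [exact Hinc |]. intros k Hk.
  apply root_comp_increasing_bounds; [lra | | exact Hinc | exact Hk].
  apply pos_of_mean_pos; [lra |]. apply Hmean, Hx.
Qed.

End Integrand.

Lemma continuous_rpow_comp (g : R -> R) c u : continuous g u -> 0 < g u ->
  continuous (fun u => rpow (g u) c) u.
Proof.
  intros Hg Hpos. apply (continuous_comp g (fun v => rpow v c)); [exact Hg |].
  apply continuous_rpow, Hpos.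
Qed.

Lemma neg_inv_lt0 p : 1 < p -> - / p < 0.
Proof. intros Hp. assert (0 < / p) by (apply Rinv_0_lt_compat; lra). lra. Qed.

Lemma arcsin_p_root_comp p x : 1 < p -> 0 < x < 1 ->
  strictly_decreasing_pos (root_comp (arcsin_p p) x) /\
  (forall k, 1 <= k -> rpow (arcsin_p p (rpow x k)) (/ k) <= arcsin_p p x /\
     arcsin_p p x <= rpow (arcsin_p p (rpow x (/ k))) k).
Proof.
  intros Hp Hx.
  apply (root_comp_RInt_decreasing p (fun u => rpow (1 - u) (- / p)));
    [exact Hp | | | reflexivity | exact Hx |].
  - intros u Hu. apply continuous_rpow_comp; [| lra].
    apply (@ex_derive_continuous R_AbsRing R_NormedModule). auto_derive. exact I.
  - rewrite Rminus_0_r. apply rpow_1_l.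
  - intros s t Hs Hst Ht. apply rpow_lt_base_neg; [apply neg_inv_lt0, Hp | lra].
Qed.

Lemma artanh_p_root_comp p x : 1 < p -> 0 < x < 1 ->
  strictly_decreasing_pos (root_comp (artanh_p p) x) /\
  (forall k, 1 <= k -> rpow (artanh_p p (rpow x k)) (/ k) <= artanh_p p x /\
     artanh_p p x <= rpow (artanh_p p (rpow x (/ k))) k).
Proof.
  intros Hp Hx.
  apply (root_comp_RInt_decreasing p (fun u => / (1 - u)));
    [exact Hp | | | reflexivity | exact Hx |].
  - intros u Hu. apply (@ex_derive_continuous R_AbsRing R_NormedModule).
    auto_derive. lra.
  - rewrite Rminus_0_r. apply Rinv_1.
  - intros s t Hs Hst Ht. apply Rinv_lt_contravar; nra.
Qed.

Lemma arctan_p_root_comp p x : 1 < p -> 0 < x < 1 ->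
  strictly_increasing_pos (root_comp (arctan_p p) x) /\
  (forall k, 1 <= k -> rpow (arctan_p p (rpow x (/ k))) k <= arctan_p p x /\
     arctan_p p x <= rpow (arctan_p p (rpow x k)) (/ k)).
Proof.
  intros Hp Hx.
  apply (root_comp_RInt_increasing p (fun u => / (1 + u)));
    [exact Hp | | | reflexivity | exact Hx | |].
  - intros u Hu. apply (@ex_derive_continuous R_AbsRing R_NormedModule).
    auto_derive. lra.
  - rewrite Rplus_0_r. apply Rinv_1.
  - intros s t Hs Hst Ht. apply Rinv_lt_contravar; nra.
  - intros u Hu. apply Rinv_0_lt_compat. lra.
Qed.

Lemma arsinh_p_root_comp p x : 1 < p -> 0 < x < 1 ->
  strictly_increasing_pos (root_comp (arsinh_p p) x) /\
  (forall k, 1 <= k -> rpow (arsinh_p p (rpow x (/ k))) k <= arsinh_p p x /\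
     arsinh_p p x <= rpow (arsinh_p p (rpow x k)) (/ k)).
Proof.
  intros Hp Hx.
  apply (root_comp_RInt_increasing p (fun u => rpow (1 + u) (- / p)));
    [exact Hp | | | reflexivity | exact Hx | |].
  - intros u Hu. apply continuous_rpow_comp; [| lra].
    apply (@ex_derive_continuous R_AbsRing R_NormedModule). auto_derive. exact I.
  - rewrite Rplus_0_r. apply rpow_1_l.
  - intros s t Hs Hst Ht. apply rpow_lt_base_neg; [apply neg_inv_lt0, Hp | lra].
  - intros u Hu. apply rpow_gt0. lra.
Qed.

Theorem lemma2p4 (p x : R) (hp : 1 < p) (hx0 : 0 < x) (hx1 : x < 1) :
  strictly_decreasing_pos (root_comp (arcsin_p p) x) /\
  strictly_decreasing_pos (root_comp (artanh_p p) x) /\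
  strictly_increasing_pos (root_comp (arctan_p p) x) /\
  strictly_increasing_pos (root_comp (arsinh_p p) x) /\
  (forall k, 1 <= k ->
     (rpow (arcsin_p p (rpow x k)) (/ k) <= arcsin_p p x
        /\ arcsin_p p x <= rpow (arcsin_p p (rpow x (/ k))) k) /\
     (rpow (artanh_p p (rpow x k)) (/ k) <= artanh_p p x
        /\ artanh_p p x <= rpow (artanh_p p (rpow x (/ k))) k) /\
     (rpow (arsinh_p p (rpow x (/ k))) k <= arsinh_p p x
        /\ arsinh_p p x <= rpow (arsinh_p p (rpow x k)) (/ k)) /\
     (rpow (arctan_p p (rpow x (/ k))) k <= arctan_p p x
        /\ arctan_p p x <= rpow (arctan_p p (rpow x k)) (/ k))).
Proof.
  assert (Hx : 0 < x < 1) by lra.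
  destruct (arcsin_p_root_comp p x hp Hx) as [asin_mono asin_bounds].
  destruct (artanh_p_root_comp p x hp Hx) as [atanh_mono atanh_bounds].
  destruct (arctan_p_root_comp p x hp Hx) as [atan_mono atan_bounds].
  destruct (arsinh_p_root_comp p x hp Hx) as [asinh_mono asinh_bounds].
  split; [exact asin_mono |]. split; [exact atanh_mono |].
  split; [exact atan_mono |]. split; [exact asinh_mono |].
  intros k Hk.
  split; [exact (asin_bounds k Hk) |]. split; [exact (atanh_bounds k Hk) |].
  split; [exact (asinh_bounds k Hk) | exact (atan_bounds k Hk)].
Qed.
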